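(* Let $\delta_1,\delta_2$ be diagonal sections of 2-copulas. (a) For $i=1,2$ let $C_i(u_1,u_2)=\min\{u_1,u_2,(\delta_i(u_1)+\delta_i(u_2))/2\}$ be the Fredricks–Nelsen copulas. (b) Alternatively, for $i=1,2$ let $C_i$ be the Bertino copulas $C_i(u_1,u_2)=u_1-\min_{t\in[u_1,u_2]}(t-\delta_i(t))$ if $u_1\le u_2$ and $C_i(u_1,u_2)=u_2-\min_{t\in[u_2,u_1]}(t-\delta_i(t))$ if $u_2\le u_1$. In either case (a) or (b), if $C_1,C_2$ admit tail dependence functions and $C_1<_{TD}C_2$, then $C_1\le_{loc}C_2$.
   Context: A 2-copula is a grounded, 2-increasing function $C:[0,1]^2\to[0,1]$ with uniform margins; its diagonal section is $\delta(t)=C(t,t)$. The Fredricks–Nelsen and Bertino functions defined from the diagonal section of any 2-copula are 2-copulas with that diagonal. Tail dependence function: $\Lambda(\boldsymbol w;C)=\lim_{s\searrow0}C(s\boldsymbol w)/s$, $\boldsymbol w\in[0,\infty)^2$. $C_1<_{TD}C_2$ means $\Lambda(\boldsymbol w;C_1)<\Lambda(\boldsymbol w;C_2)$ for all $\boldsymbol w\in(0,\infty)^2$. $C_1\le_{loc}C_2$ means there is $\varepsilon>0$ with $C_1(\boldsymbol u)\le C_2(\boldsymbol u)$ for all $\boldsymbol u\in B_\varepsilon(\boldsymbol 0)\cap[0,1]^2$ (Euclidean ball). *)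

From Stdlib Require Import Reals Lra.
From Coquelicot Require Import Coquelicot.
Open Scope R_scope.

Definition is_copula (C : R -> R -> R) : Prop :=
  (forall u1 u2, 0 <= u1 <= 1 -> 0 <= u2 <= 1 -> 0 <= C u1 u2 <= 1) /\
  (forall u, 0 <= u <= 1 -> C 0 u = 0 /\ C u 0 = 0) /\
  (forall u, 0 <= u <= 1 -> C u 1 = u /\ C 1 u = u) /\
  (forall u1 v1 u2 v2, 0 <= u1 -> u1 <= v1 -> v1 <= 1 ->
      0 <= u2 -> u2 <= v2 -> v2 <= 1 ->
      0 <= C v1 v2 - C u1 v2 - C v1 u2 + C u1 u2).

Definition is_diagonal_section (delta : R -> R) : Prop :=
  exists C, is_copula C /\ forall t, 0 <= t <= 1 -> delta t = C t t.

Definition FN_copula (delta : R -> R) (u1 u2 : R) : R :=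
  Rmin u1 (Rmin u2 ((delta u1 + delta u2) / 2)).

(* min_{t in [a,b]} (t - delta t), written as the infimum of the image
   (the minimum is attained since delta is continuous). *)
Definition min_t_minus_delta (delta : R -> R) (a b : R) : R :=
  real (Glb_Rbar (fun x => exists t, a <= t <= b /\ x = t - delta t)).

Definition Bertino_copula (delta : R -> R) (u1 u2 : R) : R :=
  if Rle_dec u1 u2 then u1 - min_t_minus_delta delta u1 u2
  else u2 - min_t_minus_delta delta u2 u1.

Definition TD_limit (C : R -> R -> R) (w1 w2 l : R) : Prop :=
  filterlim (fun s => C (s * w1) (s * w2) / s) (at_right 0) (locally l).

Definition admits_TDF (C : R -> R -> R) : Prop :=
  forall w1 w2, 0 <= w1 -> 0 <= w2 -> exists l, TD_limit C w1 w2 l.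

Definition TD_lt (C1 C2 : R -> R -> R) : Prop :=
  forall w1 w2 l1 l2, 0 < w1 -> 0 < w2 ->
    TD_limit C1 w1 w2 l1 -> TD_limit C2 w1 w2 l2 -> l1 < l2.

Definition loc_le (C1 C2 : R -> R -> R) : Prop :=
  exists eps, 0 < eps /\
    forall u1 u2, 0 <= u1 <= 1 -> 0 <= u2 <= 1 ->
      sqrt (u1 ^ 2 + u2 ^ 2) < eps -> C1 u1 u2 <= C2 u1 u2.

(* Only the diagonal w = (1,1) of the tail dependence functions is needed.
   There Lambda((1,1); C_i) is the right derivative at 0 of the diagonal of C_i, which
   is min(s, delta_i s) for Fredricks-Nelsen and delta_i s for Bertino; so C1 <_TD C2
   forces delta1 < delta2 on some interval (0, eps). Both constructions are monotone
   in the diagonal: Fredricks-Nelsen pointwise, Bertino because a larger delta lowers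
   min_{[u1,u2]} (t - delta t). Hence C1 <= C2 on [0, eps)^2, which contains the
   quarter ball of radius eps. *)

From Stdlib Require Import Reals Lra.
From Coquelicot Require Import Coquelicot.
Open Scope R_scope.

Lemma filterlim_lt_eventually {T : Type} (F : (T -> Prop) -> Prop) {FF : Filter F}
    (f1 f2 : T -> R) (l1 l2 : R) :
  filterlim f1 F (locally l1) -> filterlim f2 F (locally l2) -> l1 < l2 ->
  F (fun x => f1 x < f2 x).
Proof.
  intros H1 H2 Hl.
  set (m := (l1 + l2) / 2).
  assert (Hf1 : F (fun x => f1 x < m))
    by (apply (H1 (fun y => y < m)), (open_lt m); unfold m; lra).
  assert (Hf2 : F (fun x => m < f2 x))
    by (apply (H2 (fun y => m < y)), (open_gt m); unfold m; lra).
  apply (filter_imp _ _ (fun x H => Rlt_trans _ m _ (proj1 H) (proj2 H))).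
  exact (filter_and _ _ Hf1 Hf2).
Qed.

Lemma TD_lt_diag (C1 C2 : R -> R -> R) :
  admits_TDF C1 -> admits_TDF C2 -> TD_lt C1 C2 ->
  exists eps, 0 < eps /\ forall s, 0 < s < eps -> C1 s s < C2 s s.
Proof.
  intros A1 A2 T.
  destruct (A1 1 1) as [l1 H1]; try lra.
  destruct (A2 1 1) as [l2 H2]; try lra.
  destruct (filterlim_lt_eventually _ _ _ _ _ H1 H2 (T 1 1 l1 l2 Rlt_0_1 Rlt_0_1 H1 H2))
    as [eps Heps].
  exists eps; split; [apply cond_pos|].
  intros s Hs.
  assert (Hball : ball 0 eps s).
  { unfold ball; simpl; unfold AbsRing_ball, abs, minus, plus, opp; simpl.
    rewrite Rabs_pos_eq; lra. }
  pose proof (Heps s Hball (proj1 Hs)) as Hlt.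
  rewrite Rmult_1_r in Hlt.
  apply Rmult_lt_reg_r with (/ s); [apply Rinv_0_lt_compat; lra | exact Hlt].
Qed.

Lemma le_near0_of_lt_near0 (f g : R -> R) (eps : R) :
  f 0 = g 0 -> (forall s, 0 < s < eps -> f s < g s) ->
  forall t, 0 <= t < eps -> f t <= g t.
Proof.
  intros H0 Hlt t [[Ht | <-] Hte]; [left; apply Hlt; lra | lra].
Qed.

Lemma loc_le_of_le_near0 (C1 C2 : R -> R -> R) (eps : R) : 0 < eps ->
  (forall u1 u2, 0 <= u1 < eps -> 0 <= u2 < eps -> C1 u1 u2 <= C2 u1 u2) ->
  loc_le C1 C2.
Proof.
  intros He Hle; exists eps; split; [exact He|].
  intros u1 u2 Hu1 Hu2 Hnorm.
  destruct (sqrt_plus_sqr u1 u2) as [Hmax _].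
  rewrite !Rabs_pos_eq in Hmax by lra.
  pose proof (Rmax_l u1 u2); pose proof (Rmax_r u1 u2).
  apply Hle; lra.
Qed.

Lemma diagonal_section0 (delta : R -> R) : is_diagonal_section delta -> delta 0 = 0.
Proof.
  intros [C [[_ [Hground _]] Hdiag]].
  rewrite Hdiag by lra; apply (Hground 0); lra.
Qed.

Lemma diagonal_section_le1 (delta : R -> R) :
  is_diagonal_section delta -> forall t, 0 <= t <= 1 -> delta t <= 1.
Proof.
  intros [C [[Hrange _] Hdiag]] t Ht.
  rewrite Hdiag by exact Ht; apply Hrange; exact Ht.
Qed.

Lemma FN_copula_diag (delta : R -> R) (s : R) :
  FN_copula delta s s = Rmin s (delta s).
Proof.
  unfold FN_copula; rewrite Rmin_assoc, (Rmin_left s s) by lra.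
  f_equal; field.
Qed.

Lemma FN_copula_le (delta1 delta2 : R -> R) (u1 u2 : R) :
  delta1 u1 <= delta2 u1 -> delta1 u2 <= delta2 u2 ->
  FN_copula delta1 u1 u2 <= FN_copula delta2 u1 u2.
Proof.
  intros H1 H2; unfold FN_copula, Rmin; repeat destruct Rle_dec; lra.
Qed.

Lemma min_t_minus_delta_point (delta : R -> R) (s : R) :
  min_t_minus_delta delta s s = s - delta s.
Proof.
  unfold min_t_minus_delta.
  rewrite (is_glb_Rbar_unique _ (s - delta s)); [reflexivity|].
  split.
  - intros x [t [Ht ->]]; replace t with s by lra; apply Rle_refl.
  - intros l Hl; apply Hl; exists s; split; [lra | reflexivity].
Qed.

Lemma min_t_minus_delta_le (delta1 delta2 : R -> R) (a b m : R) : a <= b ->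
  (forall t, a <= t <= b -> m <= t - delta2 t) ->
  (forall t, a <= t <= b -> delta1 t <= delta2 t) ->
  min_t_minus_delta delta2 a b <= min_t_minus_delta delta1 a b.
Proof.
  intros Hab Hm Hle; unfold min_t_minus_delta.
  set (E1 := fun x => exists t, a <= t <= b /\ x = t - delta1 t).
  set (E2 := fun x => exists t, a <= t <= b /\ x = t - delta2 t).
  destruct (Glb_Rbar_correct E1) as [lb1 glb1].
  destruct (Glb_Rbar_correct E2) as [lb2 glb2].
  assert (Hfin2 : Rbar_le m (Glb_Rbar E2)).
  { apply glb2; intros x [t [Ht ->]]; exact (Hm t Ht). }
  assert (Hfin1 : Rbar_le (Glb_Rbar E1) (a - delta1 a)).
  { apply lb1; exists a; split; [lra | reflexivity]. }
  assert (Hmono : Rbar_le (Glb_Rbar E2) (Glb_Rbar E1)).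
  { apply glb1; intros x [t [Ht ->]].
    apply Rbar_le_trans with (t - delta2 t).
    - apply lb2; exists t; split; [exact Ht | reflexivity].
    - simpl; specialize (Hle t Ht); lra. }
  destruct (Glb_Rbar E1), (Glb_Rbar E2); simpl in *; try contradiction; lra.
Qed.

Lemma Bertino_copula_diag (delta : R -> R) (s : R) :
  Bertino_copula delta s s = delta s.
Proof.
  unfold Bertino_copula; destruct Rle_dec; [|lra].
  rewrite min_t_minus_delta_point; ring.
Qed.

Lemma Bertino_copula_le (delta1 delta2 : R -> R) (eps u1 u2 : R) :
  (forall t, 0 <= t < eps -> delta1 t <= delta2 t) ->
  (forall t, 0 <= t < eps -> delta2 t <= 1) ->
  0 <= u1 < eps -> 0 <= u2 < eps ->
  Bertino_copula delta1 u1 u2 <= Bertino_copula delta2 u1 u2.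
Proof.
  intros Hle Hle1 Hu1 Hu2.
  assert (Hmin : forall a b, 0 <= a -> a <= b -> b < eps ->
    min_t_minus_delta delta2 a b <= min_t_minus_delta delta1 a b).
  { intros a b Ha Hab Hb; apply min_t_minus_delta_le with (-1); [exact Hab | |];
      intros t Ht; [specialize (Hle1 t) | apply Hle]; lra. }
  unfold Bertino_copula; destruct Rle_dec.
  - pose proof (Hmin u1 u2); lra.
  - pose proof (Hmin u2 u1); lra.
Qed.

Lemma FN_copula_TD_lt_loc_le (delta1 delta2 : R -> R) :
  is_diagonal_section delta1 -> is_diagonal_section delta2 ->
  admits_TDF (FN_copula delta1) -> admits_TDF (FN_copula delta2) ->
  TD_lt (FN_copula delta1) (FN_copula delta2) ->
  loc_le (FN_copula delta1) (FN_copula delta2).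
Proof.
  intros D1 D2 A1 A2 T.
  destruct (TD_lt_diag _ _ A1 A2 T) as [eps [He Hdiag]].
  assert (Hle : forall t, 0 <= t < eps -> delta1 t <= delta2 t).
  { apply le_near0_of_lt_near0.
    - rewrite !diagonal_section0 by assumption; reflexivity.
    - intros s Hs; pose proof (Hdiag s Hs) as Hs'; rewrite !FN_copula_diag in Hs'.
      unfold Rmin in Hs'; repeat destruct Rle_dec; lra. }
  apply (loc_le_of_le_near0 _ _ eps He); intros u1 u2 Hu1 Hu2.
  apply FN_copula_le; apply Hle; assumption.
Qed.

Lemma Bertino_copula_TD_lt_loc_le (delta1 delta2 : R -> R) :
  is_diagonal_section delta1 -> is_diagonal_section delta2 ->
  admits_TDF (Bertino_copula delta1) -> admits_TDF (Bertino_copula delta2) ->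
  TD_lt (Bertino_copula delta1) (Bertino_copula delta2) ->
  loc_le (Bertino_copula delta1) (Bertino_copula delta2).
Proof.
  intros D1 D2 A1 A2 T.
  destruct (TD_lt_diag _ _ A1 A2 T) as [eps [He Hdiag]].
  set (eps' := Rmin eps 1).
  assert (Heps' : eps' <= eps /\ eps' <= 1) by (split; [apply Rmin_l | apply Rmin_r]).
  assert (Hle : forall t, 0 <= t < eps' -> delta1 t <= delta2 t).
  { intros t Ht; apply (le_near0_of_lt_near0 _ _ eps); [| | lra].
    - rewrite !diagonal_section0 by assumption; reflexivity.
    - intros s Hs.
      rewrite <- (Bertino_copula_diag delta1), <- (Bertino_copula_diag delta2).
      exact (Hdiag s Hs). }
  apply (loc_le_of_le_near0 _ _ eps'); [apply Rmin_pos; lra|].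
  intros u1 u2; apply Bertino_copula_le; [exact Hle|].
  intros t Ht; apply diagonal_section_le1; [exact D2 | lra].
Qed.

Theorem mainTheorem7 (delta1 delta2 : R -> R) :
  is_diagonal_section delta1 -> is_diagonal_section delta2 ->
  (admits_TDF (FN_copula delta1) -> admits_TDF (FN_copula delta2) ->
     TD_lt (FN_copula delta1) (FN_copula delta2) ->
     loc_le (FN_copula delta1) (FN_copula delta2)) /\
  (admits_TDF (Bertino_copula delta1) -> admits_TDF (Bertino_copula delta2) ->
     TD_lt (Bertino_copula delta1) (Bertino_copula delta2) ->
     loc_le (Bertino_copula delta1) (Bertino_copula delta2)).
Proof.
  intros D1 D2; split.
  - exact (FN_copula_TD_lt_loc_le delta1 delta2 D1 D2).
  - exact (Bertino_copula_TD_lt_loc_le delta1 delta2 D1 D2).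
Qed.
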